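(* Let $\mu$ be a partition of $n$ and consider its modified GP-tree. Every filling at Level 0 is a row-strict filling of $\mu$, and for each Level 0 filling $T$, $\Phi(T)$ equals the monomial labelling the Level B leaf below $T$.
   Context: Compositions: sequences of nonnegative integers summing to $n$, drawn with $\rho_k$ left-justified boxes in row $k$ (rows top to bottom). Row-strict filling: bijective placement of $1,\dots,n$ with entries increasing left to right in rows. Dimension-ordering of a composition with $r$ nonzero rows: label the far-right boxes of nonzero rows $1,\dots,r$, ordering them by column from rightmost to leftmost, and within a column top to bottom. Modified GP-tree of $\mu$: Level $n$ has the single vertex $\mu$ with no boxes filled. A vertex at Level $i$ ($1\le i\le n$) is $\mu$ with the values $i+1,\dots,n$ placed in some boxes, such that the unfilled boxes in each row form an initial (leftmost) segment, i.e. the unfilled boxes form a composition $\mu^{(i)}$ of $i$. If $\mu^{(i)}$ has $r$ nonzero rows, the vertex has $r$ children at Level $i-1$, joined by edges labelled $x_i^0,x_i^1,\dots,x_i^{r-1}$ (left to right); the child along edge $x_i^j$ is obtained by imposing the dimension-ordering on $\mu^{(i)}$ and placing the value $i$ into the unfilled box with label $j+1$. Level 0 thus consists of complete fillings of $\mu$; each Level 0 vertex has a unique child leaf at Level B joined by an edge labelled $1$, and each leaf is labelled by the product of all edge labels on the path from the root. Dimension pairs (with $h(j)=j$): $(a,b)$ is a dimension pair of a filling $T$ if $b>a$; $b$ lies in the same column as $a$ strictly below it or in a column strictly left of $a$'s; and if a box immediately right of $a$ contains $c$, then $b\le c$. $\Phi(T)=\prod_{j=2}^n x_j^{|D^T_j|}$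 where $D^T_j$ is the set of dimension pairs $(a,j)$. *)

From mathcomp Require Import all_boot.
Set Implicit Arguments. Unset Strict Implicit. Unset Printing Implicit Defensive.

(* A (partial) filling of a composition: row k is a list of its entries,
   left to right; the value 0 marks an unfilled box (values are 1..n). *)
Definition filling := seq (seq nat).

(* A monomial in x_1, x_2, ... : its exponent function (t |-> exponent of x_t). *)
Definition monomial := nat -> nat.

Definition is_partition (mu : seq nat) (n : nat) : bool :=
  (sumn mu == n) && sorted geq mu.

Definition empty_filling (mu : seq nat) : filling := [seq nseq m 0 | m <- mu].

Definition unfilled (F : filling) : seq nat := [seq count (pred1 0) row | row <- F].

(* Dimension-ordering of a composition u: the nonzero rows, ordered by the
   column of their far-right box (rightmost first), ties broken top to bottom.
   The element at index j (0-based) carries label j+1. *)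
Definition dim_order (u : seq nat) : seq nat :=
  sort (fun k l => (nth 0 u l < nth 0 u k) || ((nth 0 u k == nth 0 u l) && (k <= l)))
       [seq k <- iota 0 (size u) | 0 < nth 0 u k].

Definition nchildren (F : filling) : nat := size (dim_order (unfilled F)).

(* Child of F along edge x_i^j: place i in the unfilled box with label j+1. *)
Definition place (F : filling) (i j : nat) : filling :=
  let u := unfilled F in
  let k := nth 0 (dim_order u) j in
  set_nth [::] F k (set_nth 0 (nth [::] F k) (nth 0 u k).-1 i).

(* gp_path mu i F m : F is a vertex at Level i of the modified GP-tree of mu,
   and m is the product of the edge labels on the path from the root to F. *)
Inductive gp_path (mu : seq nat) : nat -> filling -> monomial -> Prop :=
| gp_root : gp_path mu (sumn mu) (empty_filling mu) (fun _ => 0)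
| gp_step : forall i F m j, 0 < i -> gp_path mu i F m -> j < nchildren F ->
    gp_path mu i.-1 (place F i j) (fun t => m t + (t == i) * j).

Definition row_strict (mu : seq nat) (n : nat) (T : filling) : bool :=
  [&& shape T == mu, perm_eq (flatten T) (iota 1 n) & all (sorted ltn) T].

Definition boxes (T : filling) : seq (nat * nat) :=
  [seq (r, c) | r <- iota 0 (size T), c <- iota 0 (size (nth [::] T r))].
Definition ent (T : filling) (p : nat * nat) : nat := nth 0 (nth [::] T p.1) p.2.

(* (a, b) is a dimension pair of T (with h(j) = j). *)
Definition dim_pair (T : filling) (a b : nat) : bool :=
  (a < b) &&
  has (fun pa => (ent T pa == a) &&
     has (fun pb => [&& ent T pb == b,
                        ((pb.2 == pa.2) && (pa.1 < pb.1)) || (pb.2 < pa.2)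
                      & (if pa.2.+1 < size (nth [::] T pa.1)
                         then b <= ent T (pa.1, pa.2.+1) else true)])
       (boxes T))
    (boxes T).

Definition D_card (T : filling) (n j : nat) : nat :=
  count (fun a => dim_pair T a j) (iota 1 n).

Definition Phi (n : nat) (T : filling) : monomial :=
  fun t => if (2 <= t) && (t <= n) then D_card T n t else 0.

From mathcomp Require Import all_boot zify.
Set Implicit Arguments. Unset Strict Implicit. Unset Printing Implicit Defensive.

(* In a row-strict filling T, fix t and let L_r be the number of entries smaller
   than t in row r, so that t sits in row k, column L_k. In row r only the last
   entry smaller than t, in column L_r - 1, can form a dimension pair (a, t), and
   it does exactly when that column lies right of the column of t, or is the same
   column with r above k. Hence |D^T_t| is the number of rows preceding row k in
   the dimension ordering of the composition (L_r), where row k is counted with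
   one more box.
   In the GP-tree these numbers are the unfilled row lengths at the Level-t
   vertex (the row receiving t counted with the box t fills), and they never
   change below it because all later values are smaller than t. There the edge
   x_t^j puts t into the row labelled j + 1, which is preceded by exactly j rows
   in the dimension ordering, so the exponent of x_t is |D^T_t|. Row-strictness
   of the leaves follows from the invariant that each row consists of its
   unfilled boxes followed by the increasing run of the values placed so far. *)

Lemma uniq_map_inj_in (T1 T2 : eqType) (f : T1 -> T2) (s : seq T1) :
  uniq (map f s) -> {in s &, injective f}.
Proof.
elim: s => //= a s IH /andP[fa_s s_uniq] x y; rewrite !in_cons.
case/orP=> [/eqP->|xs]; case/orP=> [/eqP->|ys] // fE.
- by move: fa_s; rewrite fE map_f.
- by move: fa_s; rewrite -fE map_f.
- exact: IH.
Qed.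

Lemma uniq_map_has_eq (T1 T2 : eqType) (f : T1 -> T2) (P : pred T1) (s : seq T1) y :
  uniq (map f s) -> y \in s -> has (fun x => (f x == f y) && P x) s = P y.
Proof.
move=> s_uniq ys; apply/hasP/idP => [[x xs /andP[/eqP fE Px]]|Py].
  by rewrite -(uniq_map_inj_in s_uniq xs ys fE).
by exists y; rewrite ?eqxx.
Qed.

Lemma find_eq_nth (T : Type) (p : pred T) x0 (s : seq T) k :
  k < size s -> p (nth x0 s k) -> (forall r, r < k -> ~~ p (nth x0 s r)) ->
  find p s = k.
Proof.
elim: s k => [|x s IH] [|k] //= k_lt pk before; first by rewrite pk.
by rewrite (negbTE (before 0 isT)) (IH k) // => r r_lt; apply: (before r.+1).
Qed.

Lemma find_set_nth (T : Type) (p : pred T) x0 (s : seq T) k y :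
  k < size s -> p y = p (nth x0 s k) -> find p (set_nth x0 s k y) = find p s.
Proof.
elim: s k => [|x s IH] [|k] //= k_lt; first by move->.
by move/(IH k k_lt)->.
Qed.

Lemma nth_map_nil (T : Type) (f : seq T -> nat) (F : seq (seq T)) r :
  f [::] = 0 -> nth 0 (map f F) r = f (nth [::] F r).
Proof.
move=> f0; case: (ltnP r (size F)) => [r_lt|r_ge]; first exact: nth_map.
by rewrite !nth_default ?size_map.
Qed.

Lemma set_nth_nseq (T : Type) (x0 y : T) (s : seq T) z :
  set_nth x0 (nseq z.+1 x0 ++ s) z y = nseq z x0 ++ y :: s.
Proof. by elim: z => //= z ->. Qed.

Lemma perm_flatten_set_nth (T : eqType) (F : seq (seq T)) k y :
  k < size F -> perm_eq (nth [::] F k ++ flatten (set_nth [::] F k y)) (y ++ flatten F).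
Proof.
elim: F k => [|r F IH] [|k] //= k_lt; first by rewrite perm_catCA.
by rewrite perm_catCA perm_sym perm_catCA perm_cat2l perm_sym IH.
Qed.

(** * Strictly increasing rows *)

Lemma sorted_nth_lt_count s t c : sorted ltn s -> c < size s ->
  (nth 0 s c < t) = (c < count (fun x => x < t) s).
Proof.
elim: s c => [|x s IH] c //=; rewrite (path_sortedE ltn_trans) => /andP[x_lt s_sorted].
case: (ltnP x t) => [x_lt_t | t_le_x].
  by case: c => [|c] /= c_lt; rewrite ?x_lt_t // add1n ltnS IH.
have -> : count (fun y => y < t) s = 0.
  apply/eqP; rewrite -leqn0 leqNgt -has_count; apply/hasP => -[y ys].
  by apply/negP; rewrite -leqNgt (leq_trans t_le_x) // ltnW // (allP x_lt).
case: c => [|c] /= c_lt; first by rewrite ltnNge t_le_x.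
by apply/negbTE; rewrite -leqNgt (leq_trans t_le_x) // ltnW // (allP x_lt) ?mem_nth.
Qed.

Lemma count_lt_nth_sorted s c : sorted ltn s -> c < size s ->
  count (fun x => x < nth 0 s c) s = c.
Proof.
move=> s_sorted c_lt; set L := count _ s.
have L_le : L <= c.
  by rewrite leqNgt -(sorted_nth_lt_count _ s_sorted c_lt) ltnn.
have L_lt : L < size s := leq_ltn_trans L_le c_lt.
apply/eqP; rewrite eqn_leq L_le leqNgt; apply/negP => /(sorted_ltn_nth ltn_trans 0 s_sorted).
by rewrite !inE sorted_nth_lt_count // ltnn => /(_ L_lt c_lt).
Qed.

Lemma sorted_last_below s t c : sorted ltn s -> c < size s ->
  (nth 0 s c < t) && (if c.+1 < size s then t <= nth 0 s c.+1 else true)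
  = (c.+1 == count (fun x => x < t) s).
Proof.
move=> s_sorted c_lt; rewrite (sorted_nth_lt_count _ s_sorted c_lt) eqn_leq.
case: ifP => [c1_lt | /negbT c1_ge].
  by rewrite [t <= _]leqNgt (sorted_nth_lt_count _ s_sorted c1_lt) -leqNgt.
by rewrite (leq_trans (count_size _ _)) // leqNgt.
Qed.

Lemma count_iota_last (P : pred nat) m L : L <= m ->
  count (fun c => (c.+1 == L) && P c) (iota 0 m) = (0 < L) && P L.-1.
Proof.
case: L => [|L] L_le /=.
  by rewrite (@eq_count _ _ pred0) ?count_pred0.
rewrite (@eq_count _ _ (fun c => (c == L) && P L)); last first.
  by move=> c; rewrite eqSS; case: eqP => [->|].
case: (P L); last by rewrite (@eq_count _ _ pred0) ?count_pred0 // => c; rewrite andbF.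
rewrite (@eq_count _ _ (pred1 L)) => [|c]; last by rewrite andbT.
by rewrite count_uniq_mem ?iota_uniq // mem_iota add0n L_le.
Qed.

Lemma count_last_below s t (P : pred nat) : sorted ltn s ->
  count (fun c => [&& nth 0 s c < t, P c & if c.+1 < size s then t <= nth 0 s c.+1 else true])
        (iota 0 (size s))
  = (0 < count (fun x => x < t) s) && P (count (fun x => x < t) s).-1.
Proof.
move=> s_sorted; rewrite -(@count_iota_last _ (size s)) ?count_size //.
apply: eq_in_count => c.
rewrite mem_iota => /andP[_ c_lt]; rewrite -(sorted_last_below t s_sorted c_lt).
by case: (_ < t); case: (P c); rewrite /= ?andbT ?andbF.
Qed.

(** * Dimension ordering and ranks *)

Definition dim_rank (u : seq nat) (k v : nat) : nat :=
  count (fun r => (v < nth 0 u r) || ((nth 0 u r == v) && (r < k))) (iota 0 (size u)).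

Lemma mem_dim_order u k : (k \in dim_order u) = (k < size u) && (0 < nth 0 u k).
Proof. by rewrite mem_sort mem_filter mem_iota andbC. Qed.

Lemma dim_rank_dim_order u j (k := nth 0 (dim_order u) j) :
  j < size (dim_order u) -> dim_rank u k (nth 0 u k) = j.
Proof.
move=> j_lt; set D := dim_order u.
pose R a b := (nth 0 u b < nth 0 u a) || ((nth 0 u a == nth 0 u b) && (a <= b)).
pose prec r := (nth 0 u k < nth 0 u r) || ((nth 0 u r == nth 0 u k) && (r < k)).
have R_trans : transitive R.
  move=> b a c; rewrite /R => /orP[ba|/andP[/eqP ab ab']] /orP[cb|/andP[/eqP bc bc']].
  - by rewrite (ltn_trans cb ba).
  - by rewrite -bc ba.
  - by rewrite ab cb.
  - by rewrite ab bc eqxx (leq_trans ab' bc') orbT.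
have R_total : total R by move=> a b; rewrite /R; case: ltngtP; rewrite //= leq_total.
have D_sorted : pairwise R D by rewrite -(sorted_pairwise R_trans) sort_sorted.
have D_uniq : uniq D by rewrite sort_uniq filter_uniq ?iota_uniq.
have kD : k \in D by apply: mem_nth.
have prec_pos r : prec r -> 0 < nth 0 u r.
  move: kD; rewrite mem_dim_order => /andP[_ uk_pos].
  by case/orP=> [/(leq_trans _)->|/andP[/eqP-> _]].
have -> : dim_rank u k (nth 0 u k) = count prec D.
  have D_perm : perm_eq D [seq r <- iota 0 (size u) | 0 < nth 0 u r].
    by rewrite /D /dim_order perm_sort.
  rewrite (permP D_perm) count_filter; apply: eq_count => r /=.
  by rewrite -/(prec r); case: (boolP (prec r)) => [/prec_pos -> | _].
(* The rows ranked before [k] are exactly the entries of [D] before position [j]. *)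
have D_split : D = take j D ++ k :: drop j.+1 D by rewrite -drop_nth // cat_take_drop.
move: D_sorted D_uniq; rewrite D_split pairwise_cat cat_uniq /=.
move=> /and3P[/allrelP before_k _ /andP[/allP after_k _]] /and3P[_ /norP[k_notin_take _] _].
have prec_k : prec k = false by rewrite /prec !ltnn andbF.
rewrite count_cat /= prec_k.
rewrite (@eq_in_count _ _ predT (take j D)) ?count_predT ?size_take ?j_lt; last first.
  move=> x xt; have xk : x != k by apply: contraNneq k_notin_take => <-.
  move: (before_k x k xt (mem_head _ _)); rewrite /prec /R.
  by case/orP=> [->//|/andP[-> x_le]]; rewrite [x < k]ltn_neqAle xk x_le orbT.
rewrite (@eq_in_count _ _ pred0 (drop j.+1 D)) ?count_pred0 ?addn0 // => y /after_k.
by rewrite /R /prec /=; case: ltngtP => //= _; rewrite ltnNge => ->.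
Qed.

Definition below (F : filling) (t : nat) : seq nat :=
  [seq count (fun x => x < t) row | row <- F].

Definition row_of (F : filling) (t : nat) : nat := find (fun row => t \in row) F.

(* For a row-strict filling, [rank T t] is the number of dimension pairs (a, t):
   see [D_card_rank]. *)
Definition rank (F : filling) (t : nat) : nat :=
  dim_rank (below F t) (row_of F t) (nth 0 (below F t) (row_of F t)).+1.

Lemma rank_set_nth F k y t : k < size F ->
  count (fun x => x < t) y = count (fun x => x < t) (nth [::] F k) ->
  (t \in y) = (t \in nth [::] F k) -> rank (set_nth [::] F k y) t = rank F t.
Proof.
move=> k_lt below_eq mem_eq; rewrite /rank /row_of (find_set_nth k_lt mem_eq).
suff -> : below (set_nth [::] F k y) t = below F t by [].
apply: (@eq_from_nth _ 0) => [|r _]; first by rewrite !size_map size_set_nth (maxn_idPr k_lt).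
by rewrite !nth_map_nil // nth_set_nth /=; case: eqP => [->|].
Qed.

(** * The modified GP-tree *)

Definition level_row (i : nat) (row : seq nat) : Prop :=
  exists z s, row = nseq z 0 ++ s /\ path ltn i s.

Definition gp_vertex (mu : seq nat) (i : nat) (F : filling) : Prop :=
  [/\ shape F = mu, {in F, forall row, level_row i row}
    & perm_eq (flatten F) (nseq i 0 ++ iota i.+1 (sumn mu - i))].

Lemma gp_vertex_root mu : gp_vertex mu (sumn mu) (empty_filling mu).
Proof.
split.
- by rewrite /shape -map_comp (@eq_map _ _ _ id) ?map_id // => m /=; rewrite size_nseq.
- by move=> _ /mapP[m _ ->]; exists m, [::]; rewrite cats0.
- rewrite subnn cats0 /empty_filling; elim: mu => //= m mu IH.
  by rewrite nseqD perm_cat2l.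
Qed.

Lemma gp_vertex_le mu i F : gp_vertex mu i F -> i <= sumn mu.
Proof.
case=> F_shape _ /perm_size; rewrite size_flatten F_shape size_cat size_nseq size_iota.
by move->; rewrite leq_addr.
Qed.

Lemma count_level_row (p : pred nat) i z s :
  p 0 -> (forall x, i < x -> ~~ p x) -> path ltn i s -> count p (nseq z 0 ++ s) = z.
Proof.
move=> p0 p_gt; rewrite (path_sortedE ltn_trans) => /andP[/allP s_gt _].
rewrite count_cat count_nseq p0 mul1n (@eq_in_count _ _ pred0) ?count_pred0 ?addn0 //.
by move=> x /s_gt /p_gt /negbTE.
Qed.

Lemma zeros_level_row i z s : path ltn i s -> count (pred1 0) (nseq z 0 ++ s) = z.
Proof. by apply: count_level_row => // x /(leq_ltn_trans (leq0n i)); rewrite lt0n. Qed.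

Lemma below_level_row i z s : 0 < i -> path ltn i s ->
  count (fun x => x < i) (nseq z 0 ++ s) = z.
Proof. by move=> i_gt0; apply: count_level_row => // x /ltnW; rewrite -leqNgt. Qed.

Lemma gp_vertex_child mu i F j (k := nth 0 (dim_order (unfilled F)) j) :
  gp_vertex mu i F -> j < nchildren F ->
  exists z s, [/\ k < size F, nth [::] F k = nseq z.+1 0 ++ s, path ltn i s
                & place F i j = set_nth [::] F k (nseq z 0 ++ i :: s)].
Proof.
move=> [_ F_rows _] j_lt.
have: k \in dim_order (unfilled F) by apply: mem_nth.
rewrite mem_dim_order size_map nth_map_nil // => /andP[k_lt].
have [z [s [Fk s_gt]]] := F_rows _ (mem_nth [::] k_lt).
have zeros_k : count (pred1 0) (nth [::] F k) = z.
  by rewrite Fk (zeros_level_row _ s_gt).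
rewrite zeros_k; case: z Fk zeros_k => // z Fk zeros_k _.
exists z, s; split=> //.
by rewrite /place -/k nth_map_nil // zeros_k Fk set_nth_nseq.
Qed.

Section FillBox.

Variables (F : filling) (k i z : nat) (s : seq nat).
Hypotheses (k_lt : k < size F) (Fk : nth [::] F k = nseq z.+1 0 ++ s).

Let F' := set_nth [::] F k (nseq z 0 ++ i :: s).

Lemma size_fill : size F' = size F.
Proof. by rewrite size_set_nth (maxn_idPr k_lt). Qed.

Lemma rank_fill_gt t : i < t -> rank F' t = rank F t.
Proof.
move=> i_lt_t; have t_gt0 : 0 < t := leq_ltn_trans (leq0n i) i_lt_t.
apply: rank_set_nth => //; rewrite Fk.
  by rewrite !count_cat /= !count_nseq t_gt0 i_lt_t addnCA addnA.
by rewrite !mem_cat in_cons !mem_nseq eqn0Ngt t_gt0 (gtn_eqF i_lt_t) !andbF.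
Qed.

Hypotheses (i_gt0 : 0 < i) (s_gt : path ltn i s).

Lemma perm_fill : perm_eq (0 :: flatten F') (i :: flatten F).
Proof.
have := perm_flatten_set_nth (nseq z 0 ++ i :: s) k_lt; rewrite -/F' Fk -!catA /=.
rewrite -cat1s perm_catCA perm_cat2l perm_catCA perm_sym -cat1s perm_catCA perm_cat2l.
by rewrite perm_sym.
Qed.

Lemma gp_vertex_fill mu : gp_vertex mu i F -> gp_vertex mu i.-1 F'.
Proof.
move=> F_vertex; have i_le := gp_vertex_le F_vertex.
case: F_vertex => F_shape F_rows F_perm; split.
- rewrite -F_shape; apply: (@eq_from_nth _ 0) => [|r _]; first by rewrite !size_map size_fill.
  rewrite !nth_map_nil // nth_set_nth /=; case: eqP => [->|//].
  by rewrite Fk !size_cat /= !size_nseq addnS.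
- move=> row /(nthP [::]) [r]; rewrite size_fill nth_set_nth /= => r_lt <-.
  case: eqP => _; first by exists z, (i :: s); rewrite /= ltn_predL i_gt0.
  have [z' [s' [-> s'_gt]]] := F_rows _ (mem_nth [::] r_lt).
  by exists z', s'; split=> //; apply: (path_le ltn_trans _ s'_gt); rewrite ltn_predL.
- rewrite -(perm_cons 0 (flatten F')); apply: perm_trans perm_fill _.
  apply: (@perm_trans _ (i :: nseq i 0 ++ iota i.+1 (sumn mu - i))); first by rewrite perm_cons.
  have -> : sumn mu - i.-1 = (sumn mu - i).+1 by lia.
  have -> : nseq i 0 = 0 :: nseq i.-1 0 by rewrite -{1}(prednK i_gt0).
  rewrite (prednK i_gt0) /=.
  apply: (@perm_trans _ (0 :: i :: nseq i.-1 0 ++ iota i.+1 (sumn mu - i))).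
    by rewrite (perm_catCA [:: i] [:: 0]).
  by rewrite perm_cons (perm_catCA [:: i]).
Qed.

Lemma rank_fill_self mu : gp_vertex mu i F ->
  rank F' i = dim_rank (unfilled F) k (nth 0 (unfilled F) k).
Proof.
move=> [_ F_rows _].
have other_row r : r < size F ->
    count (fun x => x < i) (nth [::] F r) = nth 0 (unfilled F) r /\ i \notin nth [::] F r.
  move=> r_lt; rewrite nth_map_nil //.
  have [z' [s' [-> s'_gt]]] := F_rows _ (mem_nth [::] r_lt).
  rewrite (zeros_level_row _ s'_gt) (below_level_row _ i_gt0 s'_gt); split=> //.
  rewrite mem_cat mem_nseq (gtn_eqF i_gt0) andbF /=.
  by apply/negP => /(allP (order_path_min ltn_trans s'_gt)); rewrite ltnn.
have row_k : row_of F' i = k.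
  rewrite /row_of; apply: (find_eq_nth (x0 := [::])) => [||r r_lt]; rewrite ?size_fill //.
    by rewrite nth_set_nth /= eqxx mem_cat in_cons eqxx orbT.
  by rewrite nth_set_nth /= (ltn_eqF r_lt); case: (other_row r (ltn_trans r_lt k_lt)).
have below_k : nth 0 (below F' i) k = z.
  rewrite nth_map_nil // nth_set_nth /= eqxx count_cat /= ltnn add0n -count_cat.
  exact: below_level_row.
have unfilled_k : nth 0 (unfilled F) k = z.+1.
  by rewrite nth_map_nil // Fk (zeros_level_row _ s_gt).
rewrite /rank row_k below_k unfilled_k /dim_rank !size_map size_fill.
apply: eq_in_count => r; rewrite mem_iota add0n => /andP[_ r_lt].
have [->|r_neq_k] := eqVneq r k.
  by rewrite below_k unfilled_k !ltnn !andbF !orbF ltnNge leqnSn.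
rewrite /below nth_map_nil // nth_set_nth /= (negbTE r_neq_k).
by case: (other_row r r_lt) => ->.
Qed.

End FillBox.

Lemma gp_path_invariant mu i F m : gp_path mu i F m ->
  gp_vertex mu i F /\ forall t, m t = if i < t <= sumn mu then rank F t else 0.
Proof.
elim=> [|{}i {}F {}m j i_gt0 _ [F_vertex mE] j_lt].
  by split=> [|t]; rewrite ?ltnNge ?andNb //; apply: gp_vertex_root.
have [z [s [k_lt Fk s_gt ->]]] := gp_vertex_child F_vertex j_lt.
split=> [|t]; first exact: gp_vertex_fill.
rewrite mE; case: (ltngtP t i) => [t_lt_i | i_lt_t | ->].
- by have -> : (i.-1 < t) = false by lia.
- by rewrite (leq_ltn_trans (leq_pred i) i_lt_t) addn0 rank_fill_gt.
- rewrite ltn_predL i_gt0 (gp_vertex_le F_vertex) mul1n /=.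
  by rewrite (rank_fill_self k_lt Fk i_gt0 s_gt F_vertex) dim_rank_dim_order.
Qed.

Lemma gp_vertex0_row_strict mu T : gp_vertex mu 0 T -> row_strict mu (sumn mu) T.
Proof.
case=> T_shape T_rows; rewrite subn0 => T_perm.
apply/and3P; split=> //; first exact/eqP.
apply/allP => row rowT; have [z [s [row_eq s_pos]]] := T_rows _ rowT.
suff z0 : z = 0 by rewrite row_eq z0 (path_sorted s_pos).
apply/eqP; rewrite -leqn0 leqNgt; apply/negP => z_gt0.
have : 0 \in flatten T by apply/flattenP; exists row; rewrite // row_eq mem_cat mem_nseq z_gt0.
by rewrite (perm_mem T_perm) mem_iota.
Qed.

(** * Dimension pairs of row-strict fillings *)

Lemma map_ent_boxes (T : filling) : map (ent T) (boxes T) = flatten T.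
Proof.
rewrite map_flatten -map_comp -[in RHS](mkseq_nth [::] T) /mkseq; congr flatten.
apply: eq_map => r /=; rewrite -map_comp -[in RHS](mkseq_nth 0 (nth [::] T r)).
by apply: eq_map.
Qed.

Lemma mem_boxes (T : filling) r c :
  ((r, c) \in boxes T) = (r < size T) && (c < size (nth [::] T r)).
Proof.
apply/allpairsPdep/andP => [[r' [c' [r'T c'T [-> ->]]]] | [r_lt c_lt]].
  by move: r'T c'T; rewrite !mem_iota.
by exists r, c; rewrite !mem_iota.
Qed.

Section CompleteFilling.

Variable T : filling.
Hypothesis T_uniq : uniq (flatten T).

Let ent_uniq : uniq (map (ent T) (boxes T)).
Proof. by rewrite map_ent_boxes. Qed.

Lemma dim_pair_ent t pa pb : pa \in boxes T -> pb \in boxes T -> ent T pb = t ->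
  dim_pair T (ent T pa) t =
  [&& ent T pa < t, ((pb.2 == pa.2) && (pa.1 < pb.1)) || (pb.2 < pa.2)
    & if pa.2.+1 < size (nth [::] T pa.1) then t <= ent T (pa.1, pa.2.+1) else true].
Proof.
move=> paT pbT <-; rewrite /dim_pair (uniq_map_has_eq _ ent_uniq paT); congr (_ && _).
exact: (uniq_map_has_eq (fun pb' => (((pb'.2 == pa.2) && (pa.1 < pb'.1)) || (pb'.2 < pa.2)) && _)
          ent_uniq pbT).
Qed.

Lemma row_of_ent r c : (r, c) \in boxes T -> row_of T (ent T (r, c)) = r.
Proof.
move=> rcT; move: (rcT); rewrite mem_boxes => /andP[r_lt c_lt].
apply: (find_eq_nth (x0 := [::])) => // [|r' r'_lt]; first exact: mem_nth.
apply/negP => /(nthP 0) [c' c'_lt c'E].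
have r'cT : (r', c') \in boxes T by rewrite mem_boxes c'_lt (ltn_trans r'_lt r_lt).
by case: (uniq_map_inj_in ent_uniq r'cT rcT c'E) => r'E _; rewrite r'E ltnn in r'_lt.
Qed.

End CompleteFilling.

Lemma below_ent (T : filling) r c : (r, c) \in boxes T -> sorted ltn (nth [::] T r) ->
  nth 0 (below T (ent T (r, c))) r = c.
Proof.
by rewrite mem_boxes => /andP[_ c_lt] r_sorted; rewrite nth_map_nil // count_lt_nth_sorted.
Qed.

Lemma D_card_rank (T : filling) n t :
  all (sorted ltn) T -> perm_eq (flatten T) (iota 1 n) -> t \in flatten T ->
  D_card T n t = rank T t.
Proof.
move=> /(all_nthP [::]) T_sorted T_perm; rewrite -map_ent_boxes => /mapP[[k c] kcT ->].
have T_uniq : uniq (flatten T) by rewrite (perm_uniq T_perm) iota_uniq.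
have k_lt : k < size T by move: kcT; rewrite mem_boxes => /andP[].
rewrite /D_card -(permP T_perm) -map_ent_boxes count_map.
rewrite (eq_in_count (fun pa paT => dim_pair_ent T_uniq paT kcT erefl)).
rewrite /rank (row_of_ent T_uniq kcT) (below_ent kcT (T_sorted k k_lt)).
rewrite count_flatten /dim_rank size_map -sumn_count -map_comp; congr sumn.
apply/eq_in_map => r; rewrite mem_iota add0n => /andP[_ r_lt] /=.
rewrite count_map (count_last_below _ _ (T_sorted r r_lt)) -nth_map_nil // -/(below T _).
by case: (nth 0 (below T _) r) => [|L] //=; rewrite ltnS eqSS orbC eq_sym.
Qed.

Theorem mainTheorem6 (n : nat) (mu : seq nat) :
  is_partition mu n ->
  forall (T : filling) (m : monomial),
    gp_path mu 0 T m ->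
    row_strict mu n T /\ (forall t, Phi n T t = m t).
Proof.
move=> /andP[/eqP <- _] T m /gp_path_invariant[T_vertex mE].
have T_strict := gp_vertex0_row_strict T_vertex.
have /and3P[_ T_perm T_sorted] := T_strict.
have D_card_rankT t : 0 < t <= sumn mu -> D_card T (sumn mu) t = rank T t.
  by move=> t_in; apply: D_card_rank; rewrite // (perm_mem T_perm) mem_iota add1n ltnS.
split=> // t; rewrite /Phi mE; case: t => [|[|t]] //=.
  case: ifP => // n_gt0; rewrite -D_card_rankT ?n_gt0 //.
  rewrite /D_card (@eq_in_count _ _ pred0) ?count_pred0 // => a.
  by rewrite mem_iota => /andP[a_gt0 _]; rewrite /dim_pair [a < 1]ltnNge a_gt0.
by case: ifP => // t_in; rewrite D_card_rankT.
Qed.
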